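(* Let $\mathcal H=(M,n,\mathcal R)$ be a BMS, let $S\subseteq\mathbb R^n$ be a convex set, and let $x_0\in S$. If there exists an $\mathcal H$-closed convex polytope $P$ with $x_0\in P\subseteq S$, then the scheduler has a positional winning strategy from $x_0$ in the schedulability game with safety set $S$; in fact there is a positional strategy under which, against every environment strategy, all visited states lie in $P$ and every chosen time delay is at least a fixed positive constant.
   Context: A multi-mode system is a tuple $\mathcal H=(M,n,\mathcal R)$ with $M$ a finite nonempty set of modes, $n\ge1$ variables, and $\mathcal R:M\to 2^{\mathbb R^n}$ giving nonempty rate sets; it is a BMS if each $\mathcal R(m)$ is a bounded convex polytope. A convex polytope $P\subseteq\mathbb R^n$ is $\mathcal H$-closed if for every vertex $c$ of $P$ there exist a mode $m\in M$ and $\tau>0$ such that $c+t\,r\in P$ for all $r\in\mathcal R(m)$ and all $t\in[0,\tau]$. The schedulability game from $x_0$: in round $i\ge 1$ the scheduler chooses $(m_i,t_i)\in M\times\mathbb R_{>0}$, the environment chooses $r_i\in\mathcal R(m_i)$, and $x_i=x_{i-1}+t_ir_i$. Scheduler strategies map finite histories to timed moves; environment strategies map a finite history and the current timed move $(m,t)$ to a rate in $\mathcal R(m)$; a strategy is positional if it depends only on the last state. A run is $S$-safe if $x_i\in S$ and $x_i+t r_{i+1}\in S$ for all $i\ge0$, $t\in[0,t_{i+1}]$, and non-Zeno if $\sum_it_i=\infty$. A scheduler strategy is winning if every resulting run is $S$-safe and non-Zeno. *)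

From Stdlib Require Import Reals.
From mathcomp Require Import all_boot.
Set Implicit Arguments. Unset Strict Implicit. Unset Printing Implicit Defensive.

Local Open Scope R_scope.

Definition vec (n : nat) := 'I_n -> R.
Definition vadd n (x y : vec n) : vec n := fun i => x i + y i.
Definition vscale n (a : R) (x : vec n) : vec n := fun i => a * x i.

Definition convex n (S : vec n -> Prop) : Prop :=
  forall x y a, S x -> S y -> 0 <= a <= 1 ->
    S (vadd (vscale a x) (vscale (1 - a) y)).

Definition in_hull n k (v : 'I_k -> vec n) (x : vec n) : Prop :=
  exists w : 'I_k -> R,
    (forall j, 0 <= w j) /\ \big[Rplus/0]_(j < k) w j = 1 /\
    forall i, x i = \big[Rplus/0]_(j < k) (w j * v j i).

Definition polytope n (P : vec n -> Prop) : Prop :=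
  exists k (v : 'I_k -> vec n), (0 < k)%N /\ forall x, P x <-> in_hull v x.

Definition vertex n (P : vec n -> Prop) (c : vec n) : Prop :=
  P c /\ forall x y a, P x -> P y -> 0 < a < 1 ->
    c = vadd (vscale a x) (vscale (1 - a) y) -> x = c /\ y = c.

Definition BMS (M : finType) (n : nat) (Rates : M -> vec n -> Prop) : Prop :=
  (0 < #|M|)%N /\ (1 <= n)%N /\ forall m, polytope (Rates m).

Definition H_closed (M : finType) n (Rates : M -> vec n -> Prop)
  (P : vec n -> Prop) : Prop :=
  polytope P /\
  forall c, vertex P c -> exists m tau, 0 < tau /\
    forall r t, Rates m r -> 0 <= t <= tau -> P (vadd c (vscale t r)).

(* A round of the game: (mode, delay, rate); a history is the list of rounds
   played so far (the initial state x0 being fixed). *)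
Definition round (M : finType) n := (M * R * vec n)%type.
Definition history (M : finType) n := seq (round M n).

Definition pos_strategy (M : finType) n := vec n -> (M * R)%type.
Definition valid_pos_strategy (M : finType) n (sigma : pos_strategy M n) :=
  forall x, 0 < (sigma x).2.

Definition env_strategy (M : finType) n := history M n -> M -> R -> vec n.
Definition valid_env (M : finType) n (Rates : M -> vec n -> Prop)
  (e : env_strategy M n) := forall h m t, Rates m (e h m t).

Definition state (M : finType) n (x0 : vec n) (h : history M n) : vec n :=
  foldl (fun x (rd : round M n) => vadd x (vscale rd.1.2 rd.2)) x0 h.

Fixpoint hist (M : finType) n (x0 : vec n) (sigma : pos_strategy M n)
  (e : env_strategy M n) (i : nat) : history M n :=
  match i with
  | 0 => [::]
  | i'.+1 =>
      let h := hist x0 sigma e i' in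
      let mt := sigma (state x0 h) in
      rcons h (mt.1, mt.2, e h mt.1 mt.2)
  end.

Definition run_state (M : finType) n x0 (sigma : pos_strategy M n) e i : vec n :=
  state x0 (hist x0 sigma e i).
(* round i+1 = (m_{i+1}, t_{i+1}, r_{i+1}) *)
Definition run_round (M : finType) n x0 (sigma : pos_strategy M n) e i : round M n :=
  let h := hist x0 sigma e i in
  let mt := sigma (state x0 h) in (mt.1, mt.2, e h mt.1 mt.2).

Definition safe_run (M : finType) n (S : vec n -> Prop) x0
  (sigma : pos_strategy M n) e : Prop :=
  forall i, S (run_state x0 sigma e i) /\
    forall t, 0 <= t <= (run_round x0 sigma e i).1.2 ->
      S (vadd (run_state x0 sigma e i) (vscale t (run_round x0 sigma e i).2)).

Definition non_zeno (M : finType) n x0 (sigma : pos_strategy M n) e : Prop :=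
  forall B, exists N, B < \big[Rplus/0]_(0 <= i < N) (run_round x0 sigma e i).1.2.

Definition winning_pos (M : finType) n (Rates : M -> vec n -> Prop)
  (S : vec n -> Prop) x0 (sigma : pos_strategy M n) : Prop :=
  valid_pos_strategy sigma /\
  forall e, valid_env Rates e -> safe_run S x0 sigma e /\ non_zeno x0 sigma e.

(* 1. Generators can be taken to be vertices: a generator v_j that is not an
      extreme point of P is a convex combination of the other generators and can
      be dropped; iterating gives a generator family made of vertices only.
   2. A uniform step: by H-closedness every vertex v_j has a mode m_j and a
      horizon tau_j > 0 such that v_j + t r stays in P for t <= tau_j and all
      r in R(m_j).  A point x = sum_i w_i v_i of P has some weight w_j >= 1/k,
      and x + s r = x + w_j ((v_j + (s / w_j) r) - v_j) is again in P for
      s <= w_j tau_j, since replacing a generator of a convex combination by a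
      point of the hull stays in the hull.  Hence every x in P admits a move
      of duration at least delta = min_j tau_j / k that stays in P.
   3. Choosing such a move at each point of P gives a positional strategy that
      keeps every run inside P (so inside S), with every delay at least delta,
      so runs are safe and non-Zeno. *)

From Stdlib Require Import Reals Lra FunctionalExtensionality.
From Stdlib Require Import Classical ClassicalEpsilon.
From mathcomp Require Import all_boot.
From HB Require Import structures.
Local Open Scope R_scope.
Set Implicit Arguments.

(* Real addition as a commutative monoid with a distributive product, so that the
   generic big-operator lemmas apply to the real sums of the definitions. *)
HB.instance Definition _ := Monoid.isComLaw.Build R 0 Rplus
  (fun a b c => esym (Rplus_assoc a b c)) Rplus_comm Rplus_0_l.
HB.instance Definition _ := Monoid.isMulLaw.Build R 0 Rmult Rmult_0_l Rmult_0_r.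
HB.instance Definition _ :=
  Monoid.isAddLaw.Build R Rmult Rplus Rmult_plus_distr_r Rmult_plus_distr_l.

Notation sumR k F := (\big[Rplus/0]_(j < k) F j).

Lemma sumR_le k (f g : 'I_k -> R) : (forall j, f j <= g j) -> sumR k f <= sumR k g.
Proof. by move=> fg; apply: (big_ind2 (fun a b => a <= b)) => [|*|i _]; [lra|lra|]. Qed.

Lemma sumR_ge0 k (f : 'I_k -> R) : (forall j, 0 <= f j) -> 0 <= sumR k f.
Proof. by move=> f0; apply: (big_ind (fun a => 0 <= a)) => [|*|i _]; [lra|lra|]. Qed.

Lemma sumR_const k c : sumR k (fun _ => c) = INR k * c.
Proof.
elim: k => [|k IH]; first by rewrite big_ord0 /=; ring.
rewrite big_ord_recr /= IH; change (INR k * c + c = INR k.+1 * c).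
by rewrite S_INR; ring.
Qed.

Lemma sumR_split k (j : 'I_k) (f : 'I_k -> R) :
  sumR k f = f j + \big[Rplus/0]_(i < k.-1) f (lift j i).
Proof. exact: bigD1_ord. Qed.

Lemma sumR_rest k (j : 'I_k) (f : 'I_k -> R) :
  \big[Rplus/0]_(i < k.-1) f (lift j i) = sumR k f - f j.
Proof. by rewrite (sumR_split j); ring. Qed.

Lemma sumR_term_le k (j : 'I_k) (f : 'I_k -> R) :
  (forall i, 0 <= f i) -> f j <= sumR k f.
Proof.
move=> f0; rewrite (sumR_split j).
have := sumR_ge0 (fun i => f (lift j i)) (fun i => f0 _); lra.
Qed.
Arguments sumR_term_le {k} j {f}.

Lemma sumR_delta k (j : 'I_k) (f : 'I_k -> R) :
  sumR k (fun i => if i == j then f i else 0) = f j.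
Proof.
rewrite (sumR_split j) eqxx big1 ?Rplus_0_r // => i _.
by rewrite eq_sym (negbTE (neq_lift j i)).
Qed.

Lemma sumR_drop k (j : 'I_k) (f : 'I_k -> R) :
  sumR k (fun i => if i == j then 0 else f i) = sumR k f - f j.
Proof.
have -> : sumR k f = sumR k (fun i => (if i == j then 0 else f i)
    + (if i == j then f i else 0)).
  by apply: eq_bigr => i _; case: eqP => _; ring.
by rewrite big_split /= sumR_delta; ring.
Qed.

Lemma exists_large_weight k (w : 'I_k -> R) : (0 < k)%N -> sumR k w = 1 ->
  exists j, / INR k <= w j.
Proof.
move=> k_gt0 w1; apply: NNPP => no_large.
have small j : w j < / INR k by apply: Rnot_le_lt => wj; apply: no_large; exists j.
have kR : 0 < INR k by apply: lt_0_INR; apply/ltP.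
pose j0 := Ordinal k_gt0.
have uniform : sumR k (fun _ => / INR k) = 1 by rewrite sumR_const; field; lra.
rewrite (sumR_split j0) in w1; rewrite (sumR_split j0 (fun _ => / INR k)) in uniform.
have := sumR_le (fun i => w (lift j0 i)) (fun _ => / INR k) (fun i => Rlt_le _ _ (small _)).
have := small j0; lra.
Qed.

Lemma finite_pos_lower_bound k (f : 'I_k -> R) : (forall j, 0 < f j) ->
  exists d, 0 < d /\ forall j, d <= f j.
Proof.
move=> f_pos; pose s := sumR k (fun j => / f j).
have inv_pos j : 0 < / f j by apply: Rinv_0_lt_compat.
have s0 : 0 <= s by apply: sumR_ge0 => j; exact: Rlt_le.
exists (/ (1 + s)); split; first by apply: Rinv_0_lt_compat; lra.
move=> j; rewrite -(Rinv_inv (f j)); apply: Rinv_le_contravar => //.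
have := sumR_term_le j (fun i => Rlt_le _ _ (inv_pos i)); rewrite -/s; lra.
Qed.

Definition barycentric n k (v : 'I_k -> vec n) (w : 'I_k -> R) (x : vec n) : Prop :=
  (forall j, 0 <= w j) /\ sumR k w = 1 /\
  forall i, x i = sumR k (fun j => w j * v j i).

Section ConvexHull.
Variables (n k : nat) (v : 'I_k -> vec n).

Lemma in_hull_generator j : in_hull v (v j).
Proof.
exists (fun i => if i == j then 1 else 0); split; [|split].
- by move=> i; case: eqP => _; lra.
- exact: (sumR_delta j (fun _ => 1)).
- move=> l; rewrite -(sumR_delta j (fun i => v i l)).
  by apply: eq_bigr => i _; case: eqP => _; ring.
Qed.

Lemma barycentric_full_weight w j x : barycentric v w x -> w j = 1 -> x = v j.
Proof.
move=> [w0 [w1 wx]] wj1.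
have others0 i : w (lift j i) = 0.
  apply: Rle_antisym; last exact: w0.
  have := sumR_term_le i (fun i => w0 (lift j i)).
  by rewrite sumR_rest w1 wj1; lra.
apply: functional_extensionality => l.
by rewrite wx (sumR_split j) wj1 big1 => [|i _]; rewrite ?others0; ring.
Qed.

Lemma barycentric_replace w j x z : barycentric v w x -> in_hull v z ->
  in_hull v (fun l => x l + w j * (z l - v j l)).
Proof.
move=> [w0 [w1 wx]] [be [be0 [be1 bez]]].
exists (fun i => (if i == j then 0 else w i) + w j * be i); split; [|split].
- by move=> i; have := be0 i; have := w0 i; have := w0 j; case: eqP => _; nra.
- by rewrite big_split /= -big_distrr /= sumR_drop w1 be1; ring.
- move=> l; rewrite (eq_bigr (fun i => (if i == j then 0 else w i * v i l)
    + w j * (be i * v i l))); last by move=> i _; case: eqP => _; ring.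
  by rewrite big_split /= -big_distrr /= sumR_drop -bez -wx; ring.
Qed.

Lemma barycentric_mix al be x y a :
  barycentric v al x -> barycentric v be y -> 0 <= a <= 1 ->
  barycentric v (fun i => a * al i + (1 - a) * be i)
    (vadd (vscale a x) (vscale (1 - a) y)).
Proof.
move=> [al0 [al1 alx]] [be0 [be1 bey]] a01; split; [|split].
- by move=> i; have := al0 i; have := be0 i; nra.
- by rewrite big_split /= -!big_distrr /= al1 be1; ring.
- move=> l; rewrite /vadd /vscale alx bey !big_distrr -big_split /=.
  by apply: eq_bigr => i _; ring.
Qed.

Lemma barycentric_exclude mu j : barycentric v mu (v j) -> mu j < 1 ->
  exists mu', barycentric (fun i => v (lift j i)) mu' (v j).
Proof.
move=> [mu0 [mu1 mu_rep]] muj_lt1.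
have rest_pos : 0 < 1 - mu j by lra.
exists (fun i => / (1 - mu j) * mu (lift j i)); split; [|split].
- by move=> i; apply: Rmult_le_pos; [apply/Rlt_le/Rinv_0_lt_compat | exact: mu0].
- by rewrite -big_distrr /= sumR_rest mu1; field; lra.
- move=> l; rewrite (eq_bigr (fun i => / (1 - mu j) * (mu (lift j i) * v (lift j i) l)));
    last by move=> i _; ring.
  rewrite -big_distrr /= (sumR_rest j (fun i => mu i * v i l)) -mu_rep; field; lra.
Qed.

Lemma nonvertex_generator_rep (P : vec n -> Prop) j :
  (forall x, P x <-> in_hull v x) -> ~ vertex P (v j) ->
  exists mu, barycentric (fun i => v (lift j i)) mu (v j).
Proof.
move=> HP not_vertex.
have [x [y [a [Px [Py [a01 [vj_mix not_trivial]]]]]]] :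
    exists x y a, P x /\ P y /\ 0 < a < 1 /\
      v j = vadd (vscale a x) (vscale (1 - a) y) /\ ~ (x = v j /\ y = v j).
  apply: NNPP => no_split; apply: not_vertex; split; first exact/HP/in_hull_generator.
  move=> x y a Px Py a01 vj_mix; apply: NNPP => nontriv; apply: no_split.
  by exists x, y, a.
have [al x_al] := proj1 (HP x) Px; have [be y_be] := proj1 (HP y) Py.
have a01w : 0 <= a <= 1 by lra.
have := barycentric_mix x_al y_be a01w; rewrite -vj_mix => vj_mu.
apply: barycentric_exclude vj_mu _; apply: Rnot_le_lt => muj1; apply: not_trivial.
have [[al0 [al1 _]] [be0 [be1 _]]] := (x_al, y_be).
have := sumR_term_le j al0; have := sumR_term_le j be0; rewrite al1 be1 => bej alj.
have alj1 : al j = 1 by have := al0 j; have := be0 j; nra.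
have bej1 : be j = 1 by have := al0 j; have := be0 j; nra.
by split; [exact: barycentric_full_weight x_al alj1
          | exact: barycentric_full_weight y_be bej1].
Qed.

Lemma drop_nonvertex_generator (P : vec n -> Prop) j :
  (forall x, P x <-> in_hull v x) -> ~ vertex P (v j) ->
  forall x, P x <-> in_hull (fun i : 'I_k.-1 => v (lift j i)) x.
Proof.
move=> HP not_vertex; have [mu [mu0 [mu1 mu_rep]]] := nonvertex_generator_rep HP not_vertex.
move=> x; rewrite HP; split.
- move=> [w [w0 [w1 wx]]].
  exists (fun i => w (lift j i) + w j * mu i); split; [|split].
  + by move=> i; have := w0 (lift j i); have := w0 j; have := mu0 i; nra.
  + by rewrite big_split /= -big_distrr /= mu1 sumR_rest w1; ring.
  + move=> l; rewrite wx (sumR_split j) mu_rep big_distrr -big_split /=.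
    by apply: eq_bigr => i _; ring.
- move=> [w [w0 [w1 wx]]].
  exists (fun i => if unlift j i is Some i' then w i' else 0); split; [|split].
  + by move=> i; case: (unlift j i) => [i'|]; [apply: w0 | lra].
  + rewrite (sumR_split j) unlift_none Rplus_0_l -w1.
    by apply: eq_bigr => i _; rewrite liftK.
  + move=> l; rewrite wx (sumR_split j) unlift_none Rmult_0_l Rplus_0_l.
    by apply: eq_bigr => i _; rewrite liftK.
Qed.

End ConvexHull.

Lemma polytope_vertex_generators n (P : vec n -> Prop) :
  polytope P -> exists k (v : 'I_k -> vec n), (0 < k)%N /\
    (forall x, P x <-> in_hull v x) /\ forall j, vertex P (v j).
Proof.
move=> [k [v [k_gt0 HP]]]; elim: k v k_gt0 HP => [//|k IH] v _ HP.
case: (classic (forall j, vertex P (v j))) => [all_vertices|]; first by exists k.+1, v.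
move=> /not_all_ex_not [j not_vertex].
case: k IH v HP j not_vertex => [|k] IH v HP j not_vertex.
  exfalso; apply: not_vertex; split; first exact/HP/in_hull_generator.
  have single z : P z -> z = v j.
    move=> /HP [w z_w]; have wj1 : w j = 1.
      by case: z_w => _ [+ _]; rewrite big_ord1 (ord1 j).
    exact: barycentric_full_weight z_w wj1.
  by move=> x y a /single -> /single ->.
exact: (IH _ isT (drop_nonvertex_generator j HP not_vertex)).
Qed.

Lemma scaled_vertex_move (M : finType) n k (Rates : M -> vec n -> Prop)
  (P : vec n -> Prop) (v : 'I_k -> vec n) w x j m tau :
  (forall y, P y <-> in_hull v y) -> barycentric v w x -> 0 < w j ->
  (forall r t, Rates m r -> 0 <= t <= tau -> P (vadd (v j) (vscale t r))) ->
  forall r s, Rates m r -> 0 <= s <= w j * tau -> P (vadd x (vscale s r)).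
Proof.
move=> HP x_w wj0 vj_move r s Hr s_range.
have scaled_ok : P (vadd (v j) (vscale (s / w j) r)).
  apply: vj_move => //; split.
    by apply: Rmult_le_pos; [lra | apply/Rlt_le/Rinv_0_lt_compat].
  apply: (Rmult_le_reg_l (w j)) => //.
  have -> : w j * (s / w j) = s by field; lra.
  lra.
apply/HP; have -> : vadd x (vscale s r) =
    (fun l => x l + w j * (vadd (v j) (vscale (s / w j) r) l - v j l)).
  by apply: functional_extensionality => l; rewrite /vadd /vscale; field; lra.
exact: barycentric_replace x_w (proj1 (HP _) scaled_ok).
Qed.

Definition uniform_step {M : finType} {n} (Rates : M -> vec n -> Prop)
  (P : vec n -> Prop) (delta : R) : Prop :=
  forall x, P x -> exists m t, delta <= t /\
    forall r s, Rates m r -> 0 <= s <= t -> P (vadd x (vscale s r)).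

(* An H-closed polytope admits a uniform step with some delta > 0: take
   delta = min_j tau_j / k over the vertex generators v_j, and move from x
   along the vertex on which x has weight at least 1/k. *)
Lemma H_closed_uniform_step (M : finType) n (Rates : M -> vec n -> Prop)
  (P : vec n -> Prop) :
  H_closed Rates P -> exists delta, 0 < delta /\ uniform_step Rates P delta.
Proof.
move=> [poly_P vertex_move].
have [k [v [k_gt0 [HP vertices]]]] := polytope_vertex_generators poly_P.
have [move_of move_ok] : exists move_of : 'I_k -> M * R, forall j,
    0 < (move_of j).2 /\ forall r t, Rates (move_of j).1 r -> 0 <= t <= (move_of j).2 ->
      P (vadd (v j) (vscale t r)).
  apply: (choice (fun j (mt : M * R) => 0 < mt.2 /\ forall r t, Rates mt.1 r ->
    0 <= t <= mt.2 -> P (vadd (v j) (vscale t r)))) => j.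
  by have [m [tau [tau0 H]]] := vertex_move _ (vertices j); exists (m, tau).
have [d [d0 d_le]] :=
  @finite_pos_lower_bound k (fun j => (move_of j).2) (fun j => proj1 (move_ok j)).
have kR : 0 < INR k by apply: lt_0_INR; apply/ltP.
have ik0 : 0 < / INR k by apply: Rinv_0_lt_compat.
exists (d * / INR k); split=> [|x /HP [w x_w]]; first exact: Rmult_lt_0_compat.
have [j wj_large] := exists_large_weight w k_gt0 (proj1 (proj2 x_w)).
exists (move_of j).1, (w j * (move_of j).2); split; first by have := d_le j; nra.
by apply: scaled_vertex_move HP x_w _ (proj2 (move_ok j)); lra.
Qed.

Section PositionalStrategy.
Variables (M : finType) (n : nat) (Rates : M -> vec n -> Prop) (P : vec n -> Prop).
Variables (x0 : vec n) (delta : R).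

Definition P_keeping (sigma : pos_strategy M n) : Prop :=
  valid_pos_strategy sigma /\ forall x, P x -> delta <= (sigma x).2 /\
    forall r s, Rates (sigma x).1 r -> 0 <= s <= (sigma x).2 ->
      P (vadd x (vscale s r)).

Lemma run_state_succ (sigma : pos_strategy M n) e i :
  run_state x0 sigma e i.+1 =
  vadd (run_state x0 sigma e i) (vscale (run_round x0 sigma e i).1.2
                                         (run_round x0 sigma e i).2).
Proof. by rewrite /run_state /= /state foldl_rcons. Qed.

Lemma P_keeping_invariant sigma (e : env_strategy M n) :
  P_keeping sigma -> valid_env Rates e -> P x0 -> forall i, P (run_state x0 sigma e i).
Proof.
move=> [valid keep] valid_e Px0; elim=> [//|i IH]; rewrite run_state_succ.
have [_ stay] := keep _ IH; apply: stay; first exact: valid_e.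
by have := valid (run_state x0 sigma e i); rewrite /run_round /run_state /=; lra.
Qed.

Lemma non_zeno_of_delay_bound (sigma : pos_strategy M n) (e : env_strategy M n) :
  0 < delta ->
  (forall i, delta <= (run_round x0 sigma e i).1.2) -> non_zeno x0 sigma e.
Proof.
move=> delta0 long_delays B; have [N BN] := INR_unbounded (B / delta).
exists N; apply: (Rlt_le_trans _ (INR N * delta)).
  have -> : B = B / delta * delta by field; lra.
  exact: Rmult_lt_compat_r.
elim: N {BN} => [|N IH]; first by rewrite big_geq //=; lra.
rewrite big_nat_recr //=; change (INR N.+1 * delta <= \big[Rplus/0]_(0 <= i < N)
  (run_round x0 sigma e i).1.2 + (run_round x0 sigma e N).1.2).
by rewrite S_INR; have := long_delays N; lra.
Qed.

End PositionalStrategy.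

Lemma P_keeping_strategy_exists {M : finType} {n} {Rates : M -> vec n -> Prop}
  {P : vec n -> Prop} (m0 : M) {delta} :
  0 < delta -> uniform_step Rates P delta ->
  exists sigma : pos_strategy M n, P_keeping Rates P delta sigma.
Proof.
move=> delta0 step.
have [sigma sigma_ok] : exists sigma : pos_strategy M n, forall x, 0 < (sigma x).2 /\
    (P x -> delta <= (sigma x).2 /\ forall r s, Rates (sigma x).1 r ->
      0 <= s <= (sigma x).2 -> P (vadd x (vscale s r))).
  apply: (choice (fun x (mt : M * R) => 0 < mt.2 /\ (P x -> delta <= mt.2 /\
    forall r s, Rates mt.1 r -> 0 <= s <= mt.2 -> P (vadd x (vscale s r))))) => x.
  case: (classic (P x)) => [Px | notPx]; last by exists (m0, 1); split=> //=; lra.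
  by have [m [t [t_ge step_ok]]] := step x Px; exists (m, t); split=> //=; lra.
by exists sigma; split=> [x | x Px]; [case: (sigma_ok x) | exact: (proj2 (sigma_ok x))].
Qed.

Theorem proposition1 (M : finType) (n : nat) (Rates : M -> vec n -> Prop)
  (S : vec n -> Prop) (x0 : vec n) (P : vec n -> Prop) :
  BMS Rates -> convex S -> S x0 ->
  H_closed Rates P -> P x0 -> (forall x, P x -> S x) ->
  exists sigma : pos_strategy M n,
    winning_pos Rates S x0 sigma /\
    exists delta : R, 0 < delta /\
      forall e, valid_env Rates e ->
        forall i, P (run_state x0 sigma e i) /\
                  delta <= (run_round x0 sigma e i).1.2.
Proof.
move=> _ _ _ HC Px0 PS.
have [delta [delta0 step]] := H_closed_uniform_step HC.
have [m0 _] := step x0 Px0.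
have [sigma [valid keep]] := P_keeping_strategy_exists m0 delta0 step.
have inP e (valid_e : valid_env Rates e) i :=
  P_keeping_invariant x0 (conj valid keep) valid_e Px0 i.
have long_delays e (valid_e : valid_env Rates e) i := proj1 (keep _ (inP e valid_e i)).
exists sigma; split; last first.
  by exists delta; split=> [// | e valid_e i]; split; [exact: inP | exact: long_delays].
split=> // e valid_e; split.
  by move=> i; split=> [|t t_range]; apply: PS;
    [exact: inP | exact: (proj2 (keep _ (inP e valid_e i))) (valid_e _ _ _) t_range].
exact: non_zeno_of_delay_bound delta0 (long_delays e valid_e).
Qed.
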